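(* Let $\{t_n\}_{n\in\mathbb Z}\subset\mathbb R$ be increasing with $t_n\to\pm\infty$ as $n\to\pm\infty$, and let $\mu_n>0$ with $\sum_n\mu_n<\infty$. Let $A$ be an entire function, real on $\mathbb R$, with only simple real zeros, located exactly at the points $t_n$. Define the entire function $B$ by $$\frac{B(z)}{A(z)}=\sum_n\frac{\mu_n}{z-t_n},$$ and let $s_n$ denote the zero of $B$ in $(t_n,t_{n+1})$. Then $$\sum_{s_n>0}\frac{t_{n+1}-s_n}{s_n}<\infty,\qquad \sum_{s_n<0}\frac{s_n-t_n}{|s_n|}<\infty.$$ *)

From Stdlib Require Import Reals ZArith.
Open Scope R_scope.

Definition Cplx := (R * R)%type.
Definition Cmul (z w : Cplx) : Cplx :=
  (fst z * fst w - snd z * snd w, fst z * snd w + snd z * fst w).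
Fixpoint Cpow (z : Cplx) (k : nat) : Cplx :=
  match k with O => (1, 0) | S k' => Cmul z (Cpow z k') end.

Definition ser_conv (a : nat -> R) (z w : Cplx) : Prop :=
  Un_cv (fun N => sum_f_R0 (fun k => a k * fst (Cpow z k)) N) (fst w) /\
  Un_cv (fun N => sum_f_R0 (fun k => a k * snd (Cpow z k)) N) (snd w).

(* An entire function real on R = a power series at 0 with real coefficients
   converging on all of C. *)
Definition entire_real (a : nat -> R) : Prop :=
  forall z : Cplx, exists w : Cplx, ser_conv a z w.

(* Summation over Z of a family g : Z -> R: the two halves
   (n >= 0 and n < 0) converge and their sums add up to l. *)
Definition zsum (g : Z -> R) (l : R) : Prop :=
  exists l1 l2,
    infinite_sum (fun k => g (Z.of_nat k)) l1 /\
    infinite_sum (fun k => g (- Z.of_nat k - 1)%Z) l2 /\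
    l = l1 + l2.

Definition zsummable (g : Z -> R) : Prop := exists l, zsum g l.

Definition pos_term (s tn1 : R) : R :=
  if Rlt_dec 0 s then (tn1 - s) / s else 0.
Definition neg_term (s tn : R) : R :=
  if Rlt_dec s 0 then (s - tn) / Rabs s else 0.

From Stdlib Require Import Reals ZArith Lia Lra.
From mathcomp Require all_boot all_order all_algebra polyrcf Rstruct ring lra zify.
Open Scope R_scope.

(* Proposition 5.3.  Since the zero s n of B in (t n, t (n+1)) is not a zero
   of A, it is a zero of the Cauchy sum  f(x) = sum_m mu m / (x - t m).

   The engine of the proof is Boole's inequality (module Boole, over any real
   closed field): for nodes tau_0 < ... < tau_(N-1), weights mu_i > 0 and
   lam > 0, the equation  sum_i mu_i / (tau_i - y) = lam  has one solution r_k
   in each gap left of tau_k, and  sum_k (tau_k - r_k) = (sum_i mu_i) / lam,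
   by Vieta's formula for the numerator polynomial.  Points of the gaps where
   the sum is at least lam lie right of the r_k, whence the inequality.

   For the s n > 0, fix P with t P > 0.  The balance f (s k) = 0 together with
   ln t - ln s <= (t - s) / s shows that, seen from ln (s k), the nodes
   ln (t m), m > P, carry a Cauchy sum at least mu P / 2.  Boole's inequality
   bounds the logarithmic gaps ln t (k+1) - ln s k in total by 2 M / mu P
   (M the total mass), and e^x - 1 <= x e^x turns this into a bound for the
   relative gaps (positive_half_summable).  The s n < 0 are treated by the
   mirror image n |-> - n of the configuration; in each of the two series
   only finitely many of the remaining terms are nonzero. *)

Module Boole.
Import all_boot all_order all_algebra polyrcf Rstruct ring lra zify.
Import Order.TTheory GRing.Theory Num.Theory.
Set Implicit Arguments. Unset Strict Implicit.
Local Open Scope ring_scope.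

Lemma inv_dist_lt (F : realFieldType) (c x y : F) :
  x < y -> c < x \/ y < c -> (c - x)^-1 < (c - y)^-1.
Proof.
move=> xy hc.
have hp : 0 < (c - x) * (c - y).
  case: hc => hc; last by apply: mulr_gt0; lra.
  by rewrite -mulrNN mulr_gt0 //; lra.
have hx : c - x != 0 by apply: contraTneq hp => ->; rewrite mul0r ltxx.
have hy : c - y != 0 by apply: contraTneq hp => ->; rewrite mulr0 ltxx.
rewrite -subr_gt0.
have -> : (c - y)^-1 - (c - x)^-1 = (y - x) / ((c - x) * (c - y))
  by field; rewrite hx hy.
by rewrite divr_gt0 // subr_gt0.
Qed.

Lemma size_index_enum_ord n : size (index_enum 'I_n) = n.
Proof. by rewrite /index_enum -enumT size_enum_ord. Qed.

Lemma prod_XsubC_subleading (R : comNzRingType) n (c : 'I_n -> R) : (0 < n)%N ->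
  (\prod_(k < n) ('X - (c k)%:P))`_n.-1 = - \sum_(k < n) c k.
Proof.
move=> n_gt0; have := @coefPn_prod_XsubC R [seq c k | k <- index_enum 'I_n].
by rewrite size_map size_index_enum_ord -lt0n n_gt0 !big_map; apply.
Qed.

Lemma size_prod_XsubC_but (R : comNzRingType) n (c : nat -> R) (i : 'I_n) :
  size (\prod_(k < n | k != i) ('X - (c k)%:P)) = n.
Proof.
have e : \prod_(k < n) ('X - (c k)%:P) =
    ('X - (c i)%:P) * \prod_(k < n | k != i) ('X - (c k)%:P) by rewrite (bigD1 i).
have := size_prod_XsubC (index_enum 'I_n) (fun k : 'I_n => c k).
rewrite size_index_enum_ord e size_monicM ?monicXsubC ?monic_prod_XsubC ?size_XsubC //.
  by case.
by rewrite monic_neq0 ?monic_prod_XsubC.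
Qed.

Section BooleIdentity.
Variables (F : rcfType) (N : nat) (tau mu : nat -> F) (lam : F).
Hypothesis tau_incr : forall i k, (i < k < N)%N -> tau i < tau k.
Hypothesis mu_pos : forall i, (i < N)%N -> 0 < mu i.
Hypothesis lam_pos : 0 < lam.

Definition cauchy (y : F) : F := \sum_(i < N) mu i / (tau i - y).

(* The k-th gap: left of tau 0 for k = 0, the interval (tau (k-1), tau k) else. *)
Definition in_gap (k : nat) (y : F) : Prop :=
  y < tau k /\ forall i, (i < k)%N -> tau i < y.

Lemma tau_le i k : (i <= k < N)%N -> tau i <= tau k.
Proof.
case/andP; rewrite leq_eqVlt => /orP[/eqP -> //|ik] kN.
by apply: ltW; apply: tau_incr; rewrite ik.
Qed.

Lemma in_gap_nonpole k y : (k < N)%N -> in_gap k y -> forall i : 'I_N, y != tau i.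
Proof.
move=> kN [yk lty] i; have [ik|ki] := ltnP i k; first by rewrite gt_eqF // lty.
by rewrite lt_eqF // (lt_le_trans yk) // tau_le // ki ltn_ord.
Qed.

Lemma cauchy_increasing k x y :
  (k < N)%N -> in_gap k x -> in_gap k y -> x < y -> cauchy x < cauchy y.
Proof.
move=> kN [xk ltx] [yk lty] xy; apply: ltr_sum.
  by rewrite has_predT size_index_enum_ord (leq_ltn_trans _ kN).
move=> i _; rewrite ltr_pM2l ?mu_pos //; apply: inv_dist_lt => //.
have [ik|ki] := ltnP i k; first by left; apply: ltx.
by right; apply: lt_le_trans yk _; rewrite tau_le // ki ltn_ord.
Qed.

(* The numerator of lam - cauchy y, a polynomial of degree N. *)
Definition boole_poly : {poly F} :=
  lam *: \prod_(k < N) ('X - (tau k)%:P) +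
  \sum_(i < N) mu i *: \prod_(k < N | k != i) ('X - (tau k)%:P).

Lemma horner_boole_poly y : boole_poly.[y] =
  lam * \prod_(k < N) (y - tau k) + \sum_(i < N) mu i * \prod_(k < N | k != i) (y - tau k).
Proof.
rewrite hornerD hornerZ horner_sum horner_prod.
congr (_ * _ + _); first by apply: eq_bigr => k _; rewrite hornerXsubC.
apply: eq_bigr => i _; rewrite hornerZ horner_prod; congr (_ * _).
by apply: eq_bigr => k _; rewrite hornerXsubC.
Qed.

Lemma horner_boole_poly_nonpole y : (forall i : 'I_N, y != tau i) ->
  boole_poly.[y] = \prod_(k < N) (y - tau k) * (lam - cauchy y).
Proof.
move=> hy; rewrite horner_boole_poly mulrBr [lam * _]mulrC; congr (_ + _).
rewrite mulr_sumr -sumrN; apply: eq_bigr => i _.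
rewrite [X in _ = - (X * _)](bigD1 i) //=.
have h : tau i - y != 0 by rewrite subr_eq0 eq_sym hy.
by field.
Qed.

Lemma horner_boole_poly_tau (j : 'I_N) :
  boole_poly.[tau j] = mu j * \prod_(k < N | k != j) (tau j - tau k).
Proof.
rewrite horner_boole_poly [X in lam * X](bigD1 j) //= subrr mul0r mulr0 add0r.
rewrite (bigD1 j) //= [X in _ + X]big1 ?addr0 // => i /negbTE ij.
by rewrite (bigD1 j) /= ?subrr ?mul0r ?mulr0 // eq_sym ij.
Qed.

Lemma boole_poly_alternates j :
  (j.+1 < N)%N -> boole_poly.[tau j] * boole_poly.[tau j.+1] < 0.
Proof.
move=> hj; have hj0 : (j < N)%N by apply: ltnW.
pose a : 'I_N := Ordinal hj0; pose b : 'I_N := Ordinal hj.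
have ba : b != a by rewrite -val_eqE /= (gtn_eqF (ltnSn j)).
rewrite -[tau j]/(tau a) -[tau j.+1]/(tau b) !horner_boole_poly_tau.
have ab : a != b by rewrite eq_sym.
rewrite [X in mu a * X](bigD1 b) //= [X in mu b * X](bigD1 a) //=.
set P1 := \prod_(k < N | _) _; set P2 := \prod_(k < N | _) _.
have tab : tau a < tau b by apply: tau_incr; rewrite ltnSn.
(* every other node lies on the same side of both tau a and tau b *)
have hP : 0 < P1 * P2.
  rewrite /P1 /P2 [X in _ * X](eq_bigl (fun k => (k != a) && (k != b))); last first.
    by move=> k; rewrite andbC.
  rewrite -big_split /=; apply: prodr_gt0 => k /andP[ka kb].
  have [kj|jk] := ltnP k j.
    by apply: mulr_gt0; rewrite subr_gt0 tau_incr // ?kj ?(ltn_trans kj) ?ltn_ord.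
  have kb' : (j.+1 < k)%N.
    have ka' : (k : nat) != j by apply: contra ka => /eqP e; apply/eqP/val_inj.
    have kb'' : (k : nat) != j.+1 by apply: contra kb => /eqP e; apply/eqP/val_inj.
    lia.
  have tbk : tau b < tau k by apply: tau_incr; rewrite kb' ltn_ord.
  by rewrite -mulrNN mulr_gt0 // oppr_gt0 subr_lt0 // (lt_trans tab).
have := mu_pos hj0; have := mu_pos hj; rewrite -[j]/(val a) -[j.+1]/(val b) => mb ma.
have -> : mu a * ((tau a - tau b) * P1) * (mu b * ((tau b - tau a) * P2)) =
   - (mu a * mu b * ((tau b - tau a) * (tau b - tau a)) * (P1 * P2)) by ring.
have hab : 0 < tau b - tau a by rewrite subr_gt0.
by rewrite oppr_lt0 (mulr_gt0 _ hP) // !mulr_gt0.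
Qed.

Lemma mass_ratio_ge0 : 0 <= (\sum_(i < N) mu i) / lam.
Proof.
apply: divr_ge0; last exact: ltW.
by apply: sumr_ge0 => i _; apply/ltW/mu_pos.
Qed.

(* A point so far left of the nodes that the Cauchy transform is below lam. *)
Definition far_left : F := tau 0 - (\sum_(i < N) mu i) / lam - 1.

Lemma far_left_lt k : (k < N)%N -> far_left < tau k.
Proof.
move=> kN; apply: (lt_le_trans (y := tau 0)); last by apply: tau_le; rewrite kN.
by have := mass_ratio_ge0; rewrite /far_left; lra.
Qed.

Lemma cauchy_far_left : (0 < N)%N -> cauchy far_left < lam.
Proof.
move=> N_gt0; have hML := mass_ratio_ge0; set M := \sum_(i < N) mu i in hML *.
set c := M / lam + 1; have c_gt0 : 0 < c by rewrite /c; lra.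
have dist : forall i : 'I_N, c <= tau i - far_left.
  move=> i; have h : tau 0 <= tau i by apply: tau_le; rewrite ltn_ord.
  by rewrite /far_left -/M /c; lra.
apply: (le_lt_trans (y := M / c)).
  rewrite /M mulr_suml; apply: ler_sum => i _.
  apply: ler_wpM2l; first exact/ltW/mu_pos.
  by rewrite lef_pV2 ?posrE ?dist // (lt_le_trans c_gt0).
rewrite ltr_pdivrMr // /c mulrDr mulr1 mulrCA divff ?mulr1 ?gt_eqF //.
by rewrite ltrDl.
Qed.

Lemma boole_poly_sign_left : (0 < N)%N ->
  boole_poly.[far_left] * boole_poly.[tau 0] < 0.
Proof.
move=> N_gt0; set y0 := far_left; pose o : 'I_N := Ordinal N_gt0.
have lt_y0 : forall k : 'I_N, y0 < tau k by move=> k; apply: far_left_lt.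
have y0_gap : in_gap 0 y0 by split => //; apply: (lt_y0 o).
rewrite horner_boole_poly_nonpole; last exact: in_gap_nonpole N_gt0 y0_gap.
rewrite -[tau 0]/(tau o) horner_boole_poly_tau (bigD1 o) //=.
set P1 := \prod_(k < N | _) _; set P2 := \prod_(k < N | _) _.
(* all other nodes lie right of both y0 and tau o *)
have hP : 0 < P1 * P2.
  rewrite -big_split /=; apply: prodr_gt0 => k ko.
  have tk : tau o < tau k.
    by apply: tau_incr; rewrite ltn_ord andbT lt0n; apply: contra ko => /eqP e; apply/eqP/val_inj.
  by rewrite -mulrNN mulr_gt0 // oppr_gt0 subr_lt0 // (lt_y0 k).
have mo := mu_pos N_gt0.
have hd : 0 < tau o - y0 by rewrite subr_gt0; apply: lt_y0.
have hl : 0 < lam - cauchy y0 by rewrite subr_gt0; apply: cauchy_far_left.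
have -> : (y0 - tau o) * P1 * (lam - cauchy y0) * (mu o * P2) =
   - ((tau o - y0) * (lam - cauchy y0) * mu o * (P1 * P2)) by ring.
by rewrite oppr_lt0 (mulr_gt0 _ hP) // !mulr_gt0.
Qed.

Lemma boole_poly_root_in_gap (k : 'I_N) : exists x, in_gap k x /\ root boole_poly x.
Proof.
case: k => [[|k] hk] /=.
  have [x] := poly_ivtoo (ltW (far_left_lt hk)) (boole_poly_sign_left hk).
  by rewrite in_itv /= => /andP[_ xt] rx; exists x.
have tk : tau k <= tau k.+1 by apply/ltW/tau_incr; rewrite ltnSn.
have [x] := poly_ivtoo tk (boole_poly_alternates hk).
rewrite in_itv /= => /andP[tx xt] rx; exists x; split => //; split => // i ik.
by apply: le_lt_trans tx; apply: tau_le; rewrite -ltnS ik ltnW.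
Qed.

Lemma cauchy_at_root k x :
  (k < N)%N -> in_gap k x -> root boole_poly x -> cauchy x = lam.
Proof.
move=> kN xk; have nx := in_gap_nonpole kN xk.
have : \prod_(i < N) (x - tau i) != 0 by apply/prodf_neq0 => i _; rewrite subr_eq0.
rewrite /root horner_boole_poly_nonpole // mulf_eq0 => /negbTE ->.
by rewrite subr_eq0 eq_sym => /eqP.
Qed.

Lemma size_boole_poly : size boole_poly = N.+1.
Proof.
rewrite size_polyDl size_scale ?gt_eqF // size_prod_XsubC size_index_enum_ord // ltnS.
apply: leq_trans (size_sum _ _ _) _; apply/bigmax_leqP => i _.
by apply: leq_trans (size_scale_leq _ _) _; rewrite size_prod_XsubC_but.
Qed.

Lemma lead_coef_boole_poly : lead_coef boole_poly = lam.
Proof.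
rewrite lead_coefE size_boole_poly coefD coefZ coef_sum [X in _ + X]big1 ?addr0 => [|i _].
  have := lead_coef_prod_XsubC (index_enum 'I_N) xpredT (fun k : 'I_N => tau k).
  by rewrite lead_coefE size_prod_XsubC size_index_enum_ord /= => ->; rewrite mulr1.
by rewrite coefZ nth_default ?mulr0 // size_prod_XsubC_but.
Qed.

Lemma boole_poly_subleading : (0 < N)%N ->
  boole_poly`_N.-1 = \sum_(i < N) mu i - lam * \sum_(k < N) tau k.
Proof.
move=> N_gt0; rewrite coefD coefZ prod_XsubC_subleading // coef_sum mulrN addrC.
congr (_ - _); apply: eq_bigr => i _; rewrite coefZ.
have := lead_coef_prod_XsubC (index_enum 'I_N) (fun k => k != i) (fun k : 'I_N => tau k).
by rewrite lead_coefE size_prod_XsubC_but => ->; rewrite mulr1.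
Qed.

Theorem boole_identity : (0 < N)%N -> exists r : nat -> F,
  (forall k, (k < N)%N -> in_gap k (r k) /\ cauchy (r k) = lam) /\
  \sum_(k < N) (tau k - r k) = (\sum_(i < N) mu i) / lam.
Proof.
move=> N_gt0; have [r0 hr0] := fin_all_exists boole_poly_root_in_gap.
have gap_r0 : forall k : 'I_N, in_gap k (r0 k) by move=> k; case: (hr0 k).
have root_r0 : forall k : 'I_N, root boole_poly (r0 k) by move=> k; case: (hr0 k).
have r0_lt : forall j k : 'I_N, (j < k)%N -> r0 j < r0 k.
  by move=> j k jk; apply: lt_trans (gap_r0 j).1 ((gap_r0 k).2 _ jk).
have r0_inj : injective r0.
  move=> j k e; apply/val_inj.
  by case: (ltngtP j k) => // h; have := r0_lt _ _ h; rewrite e ltxx.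
(* the N roots found exhaust the roots of boole_poly *)
have fact : boole_poly = lam *: \prod_(k < N) ('X - (r0 k)%:P).
  rewrite -lead_coef_boole_poly -[X in _ = _ *: X](big_map r0 xpredT (fun z => 'X - z%:P)).
  apply: all_roots_prod_XsubC.
  - by rewrite size_boole_poly size_map size_index_enum_ord.
  - by apply/allP => x /mapP[k _ ->].
  - by rewrite uniq_rootsE map_inj_uniq ?index_enum_uniq.
have := boole_poly_subleading N_gt0.
rewrite {1}fact coefZ prod_XsubC_subleading // => E.
pose r k := oapp r0 0 (insub k).
have rE : forall k : 'I_N, r k = r0 k by move=> k; rewrite /r valK.
exists r; split.
  move=> k kN; have /= -> := rE (Ordinal kN).
  have /= gk := gap_r0 (Ordinal kN); have /= rk := root_r0 (Ordinal kN).
  by split; last exact: cauchy_at_root kN gk rk.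
rewrite (eq_bigr (fun k : 'I_N => tau k - r0 k)) => [|k _]; last by rewrite rE.
rewrite sumrB.
have -> : \sum_(i < N) mu i = lam * (\sum_(k < N) tau k - \sum_(k < N) r0 k).
  by rewrite mulrBr -mulrN E; ring.
by rewrite [lam * _]mulrC mulfK ?gt_eqF.
Qed.

Lemma gap_root_le k r y : (k < N)%N -> in_gap k r -> cauchy r = lam ->
  in_gap k y -> lam <= cauchy y -> r <= y.
Proof.
move=> kN gr cr gy ly; rewrite leNgt; apply/negP => yr.
by have := cauchy_increasing kN gy gr yr; rewrite cr ltNge ly.
Qed.

Theorem boole_inequality K (y : nat -> F) : (K.+1 < N)%N ->
  (forall j, (j <= K)%N -> in_gap j.+1 (y j) /\ lam <= cauchy (y j)) ->
  \sum_(j < K.+1) (tau j.+1 - y j) <= (\sum_(i < N) mu i) / lam.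
Proof.
move=> KN hy; have N_gt0 : (0 < N)%N by apply: leq_ltn_trans KN.
have [r [hr sum_r]] := boole_identity N_gt0.
pose g k := tau k - r k.
have g_ge0 : forall k, (k < N)%N -> 0 <= g k.
  by move=> k kN; rewrite subr_ge0 ltW // (hr k kN).1.1.
apply: (le_trans (y := \sum_(j < K.+1) g j.+1)).
  apply: ler_sum => j _; rewrite lerD2l lerN2.
  have jK : (j <= K)%N by rewrite -ltnS.
  have jN : (j.+1 < N)%N by apply: leq_ltn_trans KN.
  have [gy ly] := hy j jK.
  exact: gap_root_le jN (hr _ jN).1 (hr _ jN).2 gy ly.
(* the gaps 1 .. K+1 are among the gaps 0 .. N-1, and all terms are >= 0 *)
rewrite -sum_r -(big_mkord xpredT g) (big_ltn N_gt0) (big_cat_nat (n := K.+2)) //=.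
rewrite -(big_mkord xpredT (fun j => g j.+1)) big_add1 /=.
rewrite addrCA lerDl addr_ge0 ?g_ge0 // big_nat_cond sumr_ge0 // => k /andP[/andP[_ kN] _].
exact: g_ge0.
Qed.

End BooleIdentity.

Lemma sum_f_R0_big (f : nat -> R) n : sum_f_R0 f n = \sum_(i < n.+1) f i.
Proof.
elim: n => [|n IH]; first by rewrite big_ord_recr big_ord0 /= add0r.
by rewrite big_ord_recr /= IH.
Qed.

Close Scope ring_scope.
Local Open Scope R_scope.

Lemma boole_inequality_R (U K : nat) (tau mu y : nat -> R) (lam : R) :
  (forall i k, (i < k)%coq_nat -> tau i < tau k) -> (forall i, 0 < mu i) ->
  0 < lam -> (K < U)%coq_nat ->
  (forall j, (j <= K)%coq_nat -> tau j < y j < tau (S j) /\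
     lam <= sum_f_R0 (fun i => mu i / (tau i - y j)) U) ->
  sum_f_R0 (fun j => tau (S j) - y j) K <= sum_f_R0 mu U / lam.
Proof.
move=> tau_incr mu_pos lam_pos /ssrnat.ltP KU hy; apply/RleP; rewrite !sum_f_R0_big.
apply: (boole_inequality (N := U.+1)) => //.
- by move=> i k /andP[/ssrnat.ltP ik _]; apply/RltP/tau_incr.
- by move=> i _; apply/RltP/mu_pos.
- exact/RltP.
move=> j /ssrnat.leP jK; have [[lt_y y_lt] ly] := hy j jK.
split; last by move: ly; rewrite sum_f_R0_big => /RleP.
split; first exact/RltP.
move=> i; rewrite ltnS leq_eqVlt => /orP[/eqP -> | /ssrnat.ltP ij]; apply/RltP => //.
by apply: Rlt_trans lt_y; apply: tau_incr.
Qed.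

End Boole.

Lemma exp_log_gap (s t : R) : 0 < s -> 0 < t -> exp (ln t - ln s) = t / s.
Proof.
  intros Hs Ht. unfold Rminus. rewrite exp_plus, exp_Ropp, !exp_ln by assumption.
  reflexivity.
Qed.

(* Logarithmic gaps control relative gaps: for positive s <> t,
   ln t - ln s <= (t - s) / s, hence s / (t - s) <= 1 / (ln t - ln s). *)
Lemma ratio_le_inv_log_gap (s t : R) : 0 < s -> 0 < t -> s <> t ->
  s / (t - s) <= 1 / (ln t - ln s).
Proof.
  intros Hs Ht Hst.
  assert (Hlog : ln t - ln s <= (t - s) / s).
  { assert (H := exp_ineq1_le (ln t - ln s)). rewrite exp_log_gap in H by assumption.
    replace ((t - s) / s) with (t / s - 1) by (field; lra). lra. }
  (* t - s and ln t - ln s have the same sign *)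
  assert (Hprod : 0 < (t - s) * (ln t - ln s)).
  { destruct (Rlt_dec s t) as [Hlt | Hge].
    - assert (ln s < ln t) by (apply ln_increasing; assumption).
      apply Rmult_lt_0_compat; lra.
    - assert (ln t < ln s) by (apply ln_increasing; lra).
      replace ((t - s) * (ln t - ln s)) with ((s - t) * (ln s - ln t)) by ring.
      apply Rmult_lt_0_compat; lra. }
  assert (Ha : t - s <> 0) by lra.
  assert (Hb : ln t - ln s <> 0) by (intro e; rewrite e in Hprod; lra).
  apply Rmult_le_reg_r with ((t - s) * (ln t - ln s)); [exact Hprod|].
  replace (s / (t - s) * ((t - s) * (ln t - ln s))) with (s * (ln t - ln s)) by (field; auto).
  replace (1 / (ln t - ln s) * ((t - s) * (ln t - ln s))) with (t - s) by (field; auto).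
  apply Rmult_le_compat_l with (r := s) in Hlog; [|lra].
  replace (s * ((t - s) / s)) with (t - s) in Hlog by (field; lra). lra.
Qed.

Lemma relative_gap_le_log_gap (s t C : R) : 0 < s < t -> ln t - ln s <= C ->
  (t - s) / s <= exp C * (ln t - ln s).
Proof.
  intros [Hs Hst] HC. set (L := ln t - ln s).
  assert (HL : 0 < L) by (unfold L; assert (ln s < ln t) by (apply ln_increasing; lra); lra).
  assert (E : exp L = t / s) by (apply exp_log_gap; lra).
  (* exp L - 1 <= L * exp L, from 1 - L <= exp (- L) *)
  assert (H1 := exp_ineq1_le (- L)). rewrite exp_Ropp in H1.
  assert (HeL : 0 < exp L) by apply exp_pos.
  assert (H2 : exp L - 1 <= L * exp L).
  { apply Rmult_le_compat_l with (r := exp L) in H1; [|lra].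
    rewrite Rinv_r in H1 by lra. nra. }
  assert (H3 : exp L <= exp C) by (destruct (Rle_lt_or_eq_dec L C HC) as [h | ->];
                                    [left; apply exp_increasing | idtac]; lra).
  replace ((t - s) / s) with (exp L - 1) by (rewrite E; field; lra).
  nra.
Qed.

Lemma partial_sum_ge_term (f : nat -> R) (n i : nat) :
  (forall k, (k <= n)%nat -> 0 <= f k) -> (i <= n)%nat -> f i <= sum_f_R0 f n.
Proof.
  revert i; induction n as [|n IH]; intros i Hf Hi; simpl.
  - replace i with 0%nat by lia. lra.
  - assert (0 <= f (S n)) by (apply Hf; lia).
    assert (IH' : forall j, (j <= n)%nat -> f j <= sum_f_R0 f n)
      by (intros j Hj; apply IH; [intros; apply Hf|]; lia).
    destruct (Nat.eq_dec i (S n)) as [-> | Hne].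
    + assert (0 <= f 0%nat) by (apply Hf; lia).
      assert (f 0%nat <= sum_f_R0 f n) by (apply IH'; lia). lra.
    + assert (f i <= sum_f_R0 f n) by (apply IH'; lia). lra.
Qed.

Lemma partial_sum_tail_le (f : nat -> R) (P U : nat) : (forall n, 0 <= f n) ->
  sum_f_R0 (fun i => f (S P + i)%nat) U <= sum_f_R0 f (P + S U).
Proof.
  intros Hf. rewrite (tech2 f P (P + S U)) by lia.
  replace (P + S U - S P)%nat with U by lia.
  assert (0 <= sum_f_R0 f P) by (apply cond_pos_sum; exact Hf). lra.
Qed.

Lemma infinite_sum_ext (f g : nat -> R) (l : R) :
  (forall n, f n = g n) -> infinite_sum f l -> infinite_sum g l.
Proof.
  intros Hfg Hf eps Heps. destruct (Hf eps Heps) as [N HN]. exists N. intros n Hn.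
  rewrite <- (sum_eq f g n) by auto. apply HN, Hn.
Qed.

Lemma infinite_sum_opp (f : nat -> R) (l : R) :
  infinite_sum f l -> infinite_sum (fun n => - f n) (- l).
Proof.
  intros Hf eps Heps.
  assert (E : forall n, sum_f_R0 (fun k => - f k) n = - sum_f_R0 f n).
  { induction n as [|n IH]; simpl; [reflexivity|]. rewrite IH. ring. }
  destruct (Hf eps Heps) as [N HN]. exists N. intros n Hn.
  unfold Rdist in *. rewrite E.
  replace (- sum_f_R0 f n - - l) with (- (sum_f_R0 f n - l)) by ring.
  rewrite Rabs_Ropp. apply HN, Hn.
Qed.

Lemma infinite_sum_nonneg (f : nat -> R) (l : R) :
  (forall n, 0 <= f n) -> infinite_sum f l -> 0 <= l.
Proof.
  intros Hf Hl. apply Rle_trans with (sum_f_R0 f 0); [apply Hf|].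
  apply sum_incr; assumption.
Qed.

Lemma partial_sums_eventually_le (f : nat -> R) (l eps : R) :
  infinite_sum f l -> l <= 0 -> 0 < eps ->
  exists N, forall n, (N <= n)%nat -> sum_f_R0 f n <= eps.
Proof.
  intros Hl Hl0 Heps. destruct (Hl eps Heps) as [N HN].
  exists N. intros n Hn. specialize (HN n Hn). unfold Rdist in HN.
  apply Rabs_def2 in HN. lra.
Qed.

Lemma summable_eventually_zero (f : nat -> R) :
  (exists N, forall n, (N <= n)%nat -> f n = 0) -> exists l, infinite_sum f l.
Proof.
  intros [N HN]. exists (sum_f_R0 f N). intros eps Heps. exists N. intros n Hn.
  replace (sum_f_R0 f n) with (sum_f_R0 f N).
  - unfold Rdist. rewrite Rminus_diag, Rabs_R0. exact Heps.
  - induction Hn as [|n Hn IH]; [reflexivity|]. simpl. rewrite HN, <- IH by lia. ring.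
Qed.

Lemma summable_of_summable_succ (f : nat -> R) :
  (exists l, infinite_sum (fun n => f (S n)) l) -> exists l, infinite_sum f l.
Proof.
  intros [l Hl]. exists (f 0%nat + l). apply (CV_shift _ 1).
  intros eps Heps. destruct (Hl eps Heps) as [N HN]. exists N. intros n Hn.
  rewrite decomp_sum by lia. replace (Init.Nat.pred (n + 1)) with n by lia.
  unfold Rdist in *.
  replace (f 0%nat + sum_f_R0 (fun i => f (S i)) n - (f 0%nat + l))
    with (sum_f_R0 (fun i => f (S i)) n - l) by ring.
  apply HN, Hn.
Qed.

Lemma summable_of_bounded_tail (f : nat -> R) (N : nat) (B : R) :
  (forall n, 0 <= f n) -> (forall K, sum_f_R0 (fun i => f (N + i)%nat) K <= B) ->
  exists l, infinite_sum f l.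
Proof.
  intros Hf HB.
  assert (Hmono : forall m n, (m <= n)%nat -> sum_f_R0 f m <= sum_f_R0 f n).
  { intros m n Hmn. induction Hmn as [|n Hmn IH]; simpl; [lra|].
    specialize (Hf (S n)). lra. }
  assert (Hsplit : forall n,
    sum_f_R0 f (N + n) <= sum_f_R0 f N + sum_f_R0 (fun i => f (N + i)%nat) n).
  { induction n as [|n IH]; simpl.
    - rewrite Nat.add_0_r. specialize (Hf N). lra.
    - rewrite Nat.add_succ_r. simpl. lra. }
  destruct (growing_cv (fun n => sum_f_R0 f n)) as [l Hl].
  - intro n. apply Hmono. lia.
  - exists (sum_f_R0 f N + B). intros x [n ->].
    apply Rle_trans with (sum_f_R0 f (N + n)); [apply Hmono; lia|].
    specialize (Hsplit n). specialize (HB n). lra.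
  - exists l. exact Hl.
Qed.

Lemma eventually_forall_le (Q : nat -> nat -> Prop) (K : nat) :
  (forall i, (i <= K)%nat -> exists U0, forall U, (U0 <= U)%nat -> Q i U) ->
  exists U0, forall i U, (i <= K)%nat -> (U0 <= U)%nat -> Q i U.
Proof.
  induction K as [|K IH]; intros H.
  - destruct (H 0%nat (le_n 0)) as [U0 HU]. exists U0. intros i U Hi HU0.
    replace i with 0%nat by lia. auto.
  - destruct IH as [U1 H1]; [intros i Hi; apply H; lia|].
    destruct (H (S K) (le_n _)) as [U2 H2].
    exists (Nat.max U1 U2). intros i U Hi HU.
    destruct (Nat.eq_dec i (S K)) as [-> | Hne]; [apply H2 | apply H1]; lia.
Qed.

Lemma seq_increasing_lt (u : nat -> R) :
  (forall k, u k < u (S k)) -> forall i j, (i < j)%nat -> u i < u j.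
Proof.
  intros Hu i j Hij. induction Hij as [|j Hij IH]; [apply Hu|].
  specialize (Hu j). lra.
Qed.

Lemma seq_increasing_le (u : nat -> R) :
  (forall k, u k < u (S k)) -> forall i j, (i <= j)%nat -> u i <= u j.
Proof.
  intros Hu i j Hij. destruct (Nat.eq_dec i j) as [-> | Hne]; [lra|].
  left. apply seq_increasing_lt; [exact Hu | lia].
Qed.

Lemma pos_term_nonneg (s t : R) : s < t -> 0 <= pos_term s t.
Proof.
  intros Hst. unfold pos_term. destruct (Rlt_dec 0 s) as [Hs | _]; [|lra].
  left. apply Rdiv_lt_0_compat; lra.
Qed.

Lemma neg_term_as_pos_term (s t : R) : neg_term s t = pos_term (- s) (- t).
Proof.
  unfold neg_term, pos_term.
  destruct (Rlt_dec s 0) as [Hs | Hs]; destruct (Rlt_dec 0 (- s)) as [Hs' | Hs']; try lra.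
  rewrite Rabs_left by exact Hs. field. lra.
Qed.

Section PositiveHalf.
(* Balance: the Cauchy sum at s k
   over these nodes is nonpositive; it is what remains of the vanishing full
   sum after removing the positive contributions of nodes left of t 0. *)
Variables (t mu s : nat -> R) (P : nat) (M : R).
Hypothesis t_incr : forall k, t k < t (S k).
Hypothesis t_P_pos : 0 < t P.
Hypothesis mu_pos : forall k, 0 < mu k.
Hypothesis mu_bounded : forall n, sum_f_R0 mu n <= M.
Hypothesis s_gap : forall k, t k < s k < t (S k).
Hypothesis s_balance : forall k,
  exists l, infinite_sum (fun m => mu m / (s k - t m)) l /\ l <= 0.

Let t_lt := seq_increasing_lt t t_incr.
Let t_le := seq_increasing_le t t_incr.

Lemma s_ne_t k m : s k <> t m.
Proof.
  intros e. specialize (s_gap k). destruct (le_lt_dec m k) as [Hmk | Hkm].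
  - assert (t m <= t k) by (apply t_le; exact Hmk). lra.
  - assert (t (S k) <= t m) by (apply t_le; lia). lra.
Qed.

Lemma t_pos_right i : 0 < t (S P + i).
Proof. assert (t P < t (S P + i)) by (apply t_lt; lia). lra. Qed.

Lemma s_pos_right i : 0 < s (S P + i).
Proof. specialize (s_gap (S P + i)%nat). specialize (t_pos_right i). lra. Qed.

(* Past P the balance at s k forces the tail sums over the nodes m > P to be
   eventually at most - mu P / (2 s k): the nodes m <= P alone contribute at
   least mu P / s k. *)
Lemma balance_tail k : (P < k)%nat -> exists U0, forall U, (U0 <= U)%nat ->
  sum_f_R0 (fun i => mu (S P + i)%nat / (s k - t (S P + i)%nat)) U <= - (mu P / (2 * s k)).
Proof.
  intros Hk. set (x := s k).
  assert (Hx : t P < x).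
  { unfold x. assert (t P <= t k) by (apply t_le; lia). specialize (s_gap k). lra. }
  set (g := fun m => mu m / (x - t m)).
  destruct (s_balance k) as [l [Hl Hl0]].
  destruct (partial_sums_eventually_le g l (mu P / (2 * x)) Hl Hl0) as [U0 HU0].
  { apply Rdiv_lt_0_compat; [apply mu_pos | lra]. }
  exists U0. intros U HU. specialize (HU0 (P + S U)%nat ltac:(lia)).
  (* split the partial sum after the index P; the head is at least mu P / x *)
  rewrite (tech2 g P (P + S U)) in HU0 by lia.
  replace (P + S U - S P)%nat with U in HU0 by lia.
  assert (Hhead : mu P / x <= sum_f_R0 g P).
  { apply Rle_trans with (g P).
    - unfold g, Rdiv. apply Rmult_le_compat_l; [left; apply mu_pos|].
      apply Rinv_le_contravar; lra.
    - apply partial_sum_ge_term; [|lia]. intros m Hm. unfold g.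
      assert (t m <= t P) by (apply t_le; exact Hm).
      left. apply Rdiv_lt_0_compat; [apply mu_pos | lra]. }
  assert (mu P / (2 * x) = mu P / x / 2) by (field; lra).
  change (sum_f_R0 (fun i => g (S P + i)%nat) U <= - (mu P / (2 * x))). lra.
Qed.

(* On the logarithmic scale, the weights past P seen from s k, k > P, are
   eventually at least mu P / 2: this is the Boole hypothesis at ln (s k). *)
Lemma right_log_mass k : (P < k)%nat -> exists U0, forall U, (U0 <= U)%nat ->
  mu P / 2 <= sum_f_R0 (fun i => mu (S P + i)%nat / (ln (t (S P + i)%nat) - ln (s k))) U.
Proof.
  intros Hk. destruct (balance_tail k Hk) as [U0 HU0]. exists U0. intros U HU.
  specialize (HU0 U HU). set (x := s k) in HU0 |- *.
  assert (Hx : 0 < x) by (unfold x; replace k with (S P + (k - S P))%nat by lia; apply s_pos_right).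
  apply Rle_trans with (- x * sum_f_R0 (fun i => mu (S P + i)%nat / (x - t (S P + i)%nat)) U).
  - replace (mu P / 2) with (- x * - (mu P / (2 * x))) by (field; lra).
    apply Rmult_le_compat_neg_l; lra.
  - (* termwise, mu m x / (t m - x) <= mu m / (ln (t m) - ln x) *)
    rewrite scal_sum. apply sum_Rle. intros i _.
    set (m := (S P + i)%nat).
    assert (Hm := ratio_le_inv_log_gap x (t m) Hx (t_pos_right i) (s_ne_t k m)).
    assert (x - t m <> 0) by (intro e; apply (s_ne_t k m); unfold x in e; lra).
    replace (mu m / (x - t m) * - x) with (mu m * (x / (t m - x))) by (field; lra).
    replace (mu m / (ln (t m) - ln x)) with (mu m * (1 / (ln (t m) - ln x))) by (unfold Rdiv; ring).
    apply Rmult_le_compat_l; [left; apply mu_pos | exact Hm].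
Qed.

(* Boole's inequality applied to the nodes ln (t m), m > P, at the points
   ln (s k): the logarithmic gaps ln t (k + 1) - ln s k past P have sum at
   most M / (mu P / 2). *)
Lemma log_gaps_bounded K :
  sum_f_R0 (fun j => ln (t (S (S P + j))) - ln (s (S P + j)%nat)) K <= 2 * M / mu P.
Proof.
  destruct (eventually_forall_le (fun j U => mu P / 2 <= sum_f_R0 (fun i =>
      mu (S P + i)%nat / (ln (t (S P + i)%nat) - ln (s (S P + j)%nat))) U) K) as [U0 HU0].
  { intros j _. apply right_log_mass. lia. }
  set (U := Nat.max U0 (S K)).
  assert (Hmu : sum_f_R0 (fun i => mu (S P + i)%nat) U <= M).
  { apply Rle_trans with (sum_f_R0 mu (P + S U)); [|apply mu_bounded].
    apply partial_sum_tail_le. intro; left; apply mu_pos. }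
  assert (HmuP := mu_pos P).
  apply Rle_trans with (sum_f_R0 (fun i => mu (S P + i)%nat) U / (mu P / 2)).
  - replace (sum_f_R0 (fun j => ln (t (S (S P + j))) - ln (s (S P + j)%nat)) K)
      with (sum_f_R0 (fun j => ln (t (S P + S j)%nat) - ln (s (S P + j)%nat)) K)
      by (apply sum_eq; intros j _; rewrite Nat.add_succ_r; reflexivity).
    apply (Boole.boole_inequality_R (U := U) (K := K) (tau := fun i => ln (t (S P + i)%nat))
             (mu := fun i => mu (S P + i)%nat) (y := fun j => ln (s (S P + j)%nat))).
    + intros i k Hik. apply ln_increasing; [apply t_pos_right | apply t_lt; lia].
    + intro i. apply mu_pos.
    + lra.
    + unfold U. lia.
    + intros j Hj. split; [split|].
      * apply ln_increasing; [apply t_pos_right | apply s_gap].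
      * rewrite Nat.add_succ_r. apply ln_increasing; [apply s_pos_right | apply s_gap].
      * apply HU0; [exact Hj | unfold U; lia].
  - unfold Rdiv at 1. replace (2 * M / mu P) with (M * / (mu P / 2)) by (field; lra).
    apply Rmult_le_compat_r; [left; apply Rinv_0_lt_compat; lra | exact Hmu].
Qed.

(* Since each logarithmic gap is at most C := 2 M / mu P, the relative gaps
   (t (k + 1) - s k) / s k past P are at most exp C times the logarithmic ones. *)
Lemma relative_gaps_bounded K :
  sum_f_R0 (fun j => pos_term (s (S P + j)%nat) (t (S (S P + j)))) K
    <= exp (2 * M / mu P) * (2 * M / mu P).
Proof.
  set (C := 2 * M / mu P).
  set (L := fun j => ln (t (S (S P + j))) - ln (s (S P + j)%nat)).
  assert (HL : forall j, 0 <= L j).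
  { intro j. unfold L. assert (ln (s (S P + j)%nat) < ln (t (S (S P + j)))); [|lra].
    apply ln_increasing; [apply s_pos_right | apply s_gap]. }
  apply Rle_trans with (sum_f_R0 (fun j => L j * exp C) K).
  - apply sum_Rle. intros j Hj. unfold pos_term.
    destruct (Rlt_dec 0 (s (S P + j)%nat)) as [Hs | Hs]; [|specialize (s_pos_right j); lra].
    rewrite Rmult_comm. apply relative_gap_le_log_gap; [split; [exact Hs | apply s_gap]|].
    apply Rle_trans with (sum_f_R0 L K); [|apply log_gaps_bounded].
    apply (partial_sum_ge_term L K j); [intros; apply HL | exact Hj].
  - rewrite <- scal_sum. apply Rmult_le_compat_l; [left; apply exp_pos | apply log_gaps_bounded].
Qed.

End PositiveHalf.

Theorem positive_half_summable (t mu s : nat -> R) :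
  (forall k, t k < t (S k)) -> (exists P, 0 < t P) -> (forall k, 0 < mu k) ->
  (exists M, forall n, sum_f_R0 mu n <= M) -> (forall k, t k < s k < t (S k)) ->
  (forall k, exists l, infinite_sum (fun m => mu m / (s k - t m)) l /\ l <= 0) ->
  exists l, infinite_sum (fun k => pos_term (s k) (t (S k))) l.
Proof.
  intros Ht [P HP] Hmu [M HM] Hs Hbal.
  apply (summable_of_bounded_tail _ (S P) (exp (2 * M / mu P) * (2 * M / mu P))).
  - intro k. apply pos_term_nonneg, Hs.
  - apply relative_gaps_bounded; assumption.
Qed.

Lemma Zseq_increasing_lt (u : Z -> R) :
  (forall n, u n < u (n + 1)%Z) -> forall m n, (m < n)%Z -> u m < u n.
Proof.
  intros Hu m n Hmn.
  assert (H : forall k : nat, u m < u (m + Z.of_nat (S k))%Z).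
  { induction k as [|k IH].
    - apply Hu.
    - replace (m + Z.of_nat (S (S k)))%Z with (m + Z.of_nat (S k) + 1)%Z by lia.
      specialize (Hu (m + Z.of_nat (S k))%Z). lra. }
  specialize (H (Z.to_nat (n - m - 1))).
  replace (m + Z.of_nat (S (Z.to_nat (n - m - 1))))%Z with n in H by lia. exact H.
Qed.

Lemma Zseq_increasing_le (u : Z -> R) :
  (forall n, u n < u (n + 1)%Z) -> forall m n, (m <= n)%Z -> u m <= u n.
Proof.
  intros Hu m n Hmn. destruct (Z.eq_dec m n) as [-> | Hne]; [lra|].
  left. apply Zseq_increasing_lt; [exact Hu | lia].
Qed.

Lemma gap_point_ne_node (t s : Z -> R) :
  (forall n, t n < t (n + 1)%Z) -> (forall n, t n < s n < t (n + 1)%Z) ->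
  forall n m, s n <> t m.
Proof.
  intros Ht Hs n m e. specialize (Hs n). destruct (Z_le_gt_dec m n) as [Hmn | Hmn].
  - assert (t m <= t n) by (apply Zseq_increasing_le; [exact Ht | exact Hmn]). lra.
  - assert (t (n + 1)%Z <= t m) by (apply Zseq_increasing_le; [exact Ht | lia]). lra.
Qed.

(* At a point x that is not a zero of A, the zero of B = A * (Cauchy sum)
   is a zero of the Cauchy sum. *)
Lemma cauchy_sum_vanishes (a : nat -> R) (Ar : R -> R) (t mu : Z -> R) (x : R) :
  ser_conv a (x, 0) (Ar x, 0) ->
  (ser_conv a (x, 0) (0, 0) -> exists n, (x, 0) = (t n, 0)) ->
  (forall n, x <> t n) ->
  (exists v, zsum (fun m => mu m / (x - t m)) v /\ Ar x * v = 0) ->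
  zsum (fun m => mu m / (x - t m)) 0.
Proof.
  intros HA HA0 Hx [v [Hv HB]].
  assert (HAx : Ar x <> 0).
  { intros e. rewrite e in HA. destruct (HA0 HA) as [n En].
    injection En as En. exact (Hx n En). }
  apply Rmult_integral in HB. destruct HB as [HB | ->]; [contradiction | exact Hv].
Qed.

Lemma zsummable_of_halves (g : Z -> R) :
  (exists l, infinite_sum (fun k => g (Z.of_nat k)) l) ->
  (exists l, infinite_sum (fun k => g (- Z.of_nat k - 1)%Z) l) -> zsummable g.
Proof. intros [l1 H1] [l2 H2]. exists (l1 + l2), l1, l2. auto. Qed.

Lemma zsum_zero_right_half (g : Z -> R) :
  zsum g 0 -> (forall k, 0 <= g (- Z.of_nat k - 1)%Z) ->
  exists l, infinite_sum (fun k => g (Z.of_nat k)) l /\ l <= 0.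
Proof.
  intros [l1 [l2 [H1 [H2 E]]]] Hg. exists l1. split; [exact H1|].
  assert (0 <= l2) by (apply (infinite_sum_nonneg _ _ Hg H2)). lra.
Qed.

Lemma zsum_zero_left_half (g : Z -> R) :
  zsum g 0 -> (forall k, g (Z.of_nat k) <= 0) ->
  exists l, infinite_sum (fun k => g (- Z.of_nat k - 1)%Z) l /\ 0 <= l.
Proof.
  intros [l1 [l2 [H1 [H2 E]]]] Hg. exists l2. split; [exact H2|].
  assert (0 <= - l1); [|lra].
  apply (infinite_sum_nonneg (fun k => - g (Z.of_nat k))); [intro k; specialize (Hg k); lra|].
  apply infinite_sum_opp, H1.
Qed.

Section Bilateral.
Variables (t mu s : Z -> R).
Hypothesis t_incr : forall n, t n < t (n + 1)%Z.
Hypothesis t_plus : forall M, exists N, forall n, (N <= n)%Z -> M < t n.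
Hypothesis t_minus : forall M, exists N, forall n, (n <= N)%Z -> t n < M.
Hypothesis mu_pos : forall n, 0 < mu n.
Hypothesis mu_sum : zsummable mu.
Hypothesis s_gap : forall n, t n < s n < t (n + 1)%Z.
Hypothesis s_balance : forall n, zsum (fun m => mu m / (s n - t m)) 0.

Let tZ_lt := Zseq_increasing_lt t t_incr.
Let tZ_le := Zseq_increasing_le t t_incr.

Lemma pos_terms_right_summable :
  exists l, infinite_sum (fun k => pos_term (s (Z.of_nat k)) (t (Z.of_nat k + 1)%Z)) l.
Proof.
  destruct (positive_half_summable (fun k => t (Z.of_nat k)) (fun k => mu (Z.of_nat k))
              (fun k => s (Z.of_nat k))) as [l Hl].
  - intro k. rewrite Nat2Z.inj_succ. apply t_incr.
  - destruct (t_plus 0) as [N HN]. exists (Z.to_nat N). apply HN. lia.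
  - intro k. apply mu_pos.
  - destruct mu_sum as [lm [l1 [l2 [H1 _]]]]. exists l1. intro n.
    apply sum_incr; [exact H1 | intro; left; apply mu_pos].
  - intro k. rewrite Nat2Z.inj_succ. apply s_gap.
  - intro k. apply (zsum_zero_right_half (fun m => mu m / (s (Z.of_nat k) - t m))).
    { apply s_balance. }
    intro m.
    assert (t (- Z.of_nat m - 1)%Z < t (Z.of_nat k)) by (apply tZ_lt; lia).
    specialize (s_gap (Z.of_nat k)).
    left. apply Rdiv_lt_0_compat; [apply mu_pos | lra].
  - exists l. revert Hl. apply infinite_sum_ext. intro k. rewrite Nat2Z.inj_succ. reflexivity.
Qed.
(* Far to the left every s n is negative, so only finitely many terms are nonzero. *)
Lemma pos_terms_left_summable : exists l,
  infinite_sum (fun k => pos_term (s (- Z.of_nat k - 1)%Z) (t (- Z.of_nat k - 1 + 1)%Z)) l.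
Proof.
  apply summable_eventually_zero. destruct (t_minus 0) as [N HN].
  exists (Z.to_nat (- N)). intros k Hk. unfold pos_term.
  destruct (Rlt_dec 0 (s (- Z.of_nat k - 1)%Z)) as [Hs | _]; [exfalso | reflexivity].
  assert (t (- Z.of_nat k - 1 + 1)%Z < 0) by (apply HN; lia).
  specialize (s_gap (- Z.of_nat k - 1)%Z). lra.
Qed.

(* Far to the right every s n is positive, so only finitely many terms are nonzero. *)
Lemma neg_terms_right_summable :
  exists l, infinite_sum (fun k => neg_term (s (Z.of_nat k)) (t (Z.of_nat k))) l.
Proof.
  apply summable_eventually_zero. destruct (t_plus 0) as [N HN].
  exists (Z.to_nat N). intros k Hk. unfold neg_term.
  destruct (Rlt_dec (s (Z.of_nat k)) 0) as [Hs | _]; [exfalso | reflexivity].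
  assert (0 < t (Z.of_nat k)) by (apply HN; lia).
  specialize (s_gap (Z.of_nat k)). lra.
Qed.

(* Over s n < 0: the one-sided theorem for the mirrored sequences
   - t (- k - 1), - s (- k - 2), whose first series has the terms
   neg_term (s n) (t n) (neg_term_as_pos_term). *)
Lemma neg_terms_left_summable : exists l,
  infinite_sum (fun k => neg_term (s (- Z.of_nat k - 1)%Z) (t (- Z.of_nat k - 1)%Z)) l.
Proof.
  apply summable_of_summable_succ.
  destruct (positive_half_summable (fun k => - t (- Z.of_nat k - 1)%Z)
              (fun k => mu (- Z.of_nat k - 1)%Z) (fun k => - s (- Z.of_nat (S k) - 1)%Z))
    as [l Hl].
  - intro k. apply Ropp_lt_contravar, tZ_lt. lia.
  - destruct (t_minus 0) as [N HN]. exists (Z.to_nat (- N)).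
    assert (t (- Z.of_nat (Z.to_nat (- N)) - 1)%Z < 0) by (apply HN; lia). lra.
  - intro k. apply mu_pos.
  - destruct mu_sum as [lm [l1 [l2 [_ [H2 _]]]]]. exists l2. intro n.
    apply sum_incr; [exact H2 | intro; left; apply mu_pos].
  - intro k. specialize (s_gap (- Z.of_nat (S k) - 1)%Z).
    replace (- Z.of_nat (S k) - 1 + 1)%Z with (- Z.of_nat k - 1)%Z in s_gap by lia. lra.
  - intro k. set (n := (- Z.of_nat (S k) - 1)%Z).
    destruct (zsum_zero_left_half (fun m => mu m / (s n - t m))) as [l [Hl Hl0]].
    + apply s_balance.
    + intro m. assert (t (n + 1)%Z <= t (Z.of_nat m)) by (apply tZ_le; unfold n; lia).
      specialize (s_gap n). assert (Hm := mu_pos (Z.of_nat m)).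
      replace (mu (Z.of_nat m) / (s n - t (Z.of_nat m)))
        with (- (mu (Z.of_nat m) / (t (Z.of_nat m) - s n))) by (field; lra).
      assert (0 < mu (Z.of_nat m) / (t (Z.of_nat m) - s n)) by (apply Rdiv_lt_0_compat; lra).
      lra.
    + exists (- l). split; [|lra]. apply infinite_sum_opp in Hl. revert Hl.
      apply infinite_sum_ext. intro m. unfold Rdiv.
      replace (- s n - - t (- Z.of_nat m - 1)%Z) with (- (s n - t (- Z.of_nat m - 1)%Z)) by ring.
      rewrite Rinv_opp. ring.
  - exists l. revert Hl. apply infinite_sum_ext. intro k.
    rewrite neg_term_as_pos_term. reflexivity.
Qed.

End Bilateral.

Theorem proposition5p3
  (t : Z -> R) (mu : Z -> R)
  (t_incr : forall n : Z, t n < t (n + 1)%Z)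
  (t_plus : forall M : R, exists N : Z, forall n : Z, (N <= n)%Z -> M < t n)
  (t_minus : forall M : R, exists N : Z, forall n : Z, (n <= N)%Z -> t n < M)
  (mu_pos : forall n : Z, 0 < mu n)
  (mu_sum : zsummable mu)
  (a : nat -> R) (Ar : R -> R)
  (A_entire : entire_real a)
  (A_real : forall x : R, ser_conv a (x, 0) (Ar x, 0))
  (A_zeros : forall z : Cplx, ser_conv a z (0, 0) <-> exists n : Z, z = (t n, 0))
  (A_simple : forall n : Z, exists d : R, d <> 0 /\ derivable_pt_lim Ar (t n) d)
  (s : Z -> R)
  (s_int : forall n : Z, t n < s n < t (n + 1)%Z)
  (s_zero : forall n : Z, exists v : R,
      zsum (fun m => mu m / (s n - t m)) v /\ Ar (s n) * v = 0) :
  zsummable (fun n => pos_term (s n) (t (n + 1)%Z)) /\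
  zsummable (fun n => neg_term (s n) (t n)).
Proof.
  (* s n lies in a gap, so it is not a zero of A: the Cauchy sum vanishes there *)
  assert (s_balance : forall n, zsum (fun m => mu m / (s n - t m)) 0).
  { intro n. apply (cauchy_sum_vanishes a Ar).
    - apply A_real.
    - apply A_zeros.
    - intro m. apply (gap_point_ne_node t s t_incr s_int).
    - apply s_zero. }
  split; apply zsummable_of_halves.
  - eapply pos_terms_right_summable; eassumption.
  - eapply pos_terms_left_summable; eassumption.
  - eapply neg_terms_right_summable; eassumption.
  - eapply neg_terms_left_summable; eassumption.
Qed.
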